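(* Let $T\in\mathbb{R}^{d\times d\times d}$ have nonnegative entries, let $C^{(1)}_{1},\ldots,C^{(1)}_{d}$ and $C^{(2)}_{1},\ldots,C^{(2)}_{d}$ be $r\times r$ real symmetric positive definite matrices, fix $i_3\in[d]$, and let $\mathcal{A}:\mathbb{S}^r\to\mathbb{R}^{d^2}$ be $X\mapsto(\langle X,C^{(1)}_{i_1}\circ C^{(2)}_{i_2}\rangle)_{i_1,i_2\in[d]}$. Let $t=\operatorname{vec}(T_{::i_3})=(T_{i_1i_2i_3})_{i_1,i_2}$. Then $\mathcal{A}^\top t=\sum_{i_1,i_2}T_{i_1i_2i_3}C^{(1)}_{i_1}\circ C^{(2)}_{i_2}$ is positive semidefinite, and for every positive definite $C_{\mathrm{old}}$ the update $C_{\mathrm{new}}=W(\mathcal{A}^\top t)W$, $W=([\mathcal{A}^\top\mathcal{A}](C_{\mathrm{old}}))^{-1}\#C_{\mathrm{old}}$, yields a positive semidefinite matrix satisfying $\|t-\mathcal{A}(C_{\mathrm{new}})\|_2^2\le\|t-\mathcal{A}(C_{\mathrm{old}})\|_2^2$.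
   Context: $\circ$ denotes the Schur (entrywise) product of matrices, $\langle Y,Z\rangle=\operatorname{tr}(YZ)$ on the space $\mathbb{S}^r$ of $r\times r$ real symmetric matrices. The adjoint is $\mathcal{A}^\top(y)=\sum_{i_1,i_2}y_{i_1i_2}C^{(1)}_{i_1}\circ C^{(2)}_{i_2}$ and $[\mathcal{A}^\top\mathcal{A}](Z)=\mathcal{A}^\top(\mathcal{A}(Z))$. For positive definite $C,D$, $C\# D=C^{1/2}(C^{-1/2}DC^{-1/2})^{1/2}C^{1/2}$ is the matrix geometric mean. *)

From HB Require Import structures.
From mathcomp Require Import all_boot all_order all_algebra.
From mathcomp Require Import reals.
From Stdlib Require Import ClassicalEpsilon.
Set Implicit Arguments. Unset Strict Implicit. Unset Printing Implicit Defensive.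
Import Order.TTheory GRing.Theory Num.Theory.
Local Open Scope ring_scope.

Section Defs.
Variable R : realType.

Definition psdmx (n : nat) (A : 'M[R]_n) : Prop :=
  A^T = A /\ forall v : 'cV[R]_n, 0 <= (v^T *m A *m v) 0 0.

Definition pdmx (n : nat) (A : 'M[R]_n) : Prop :=
  A^T = A /\ forall v : 'cV[R]_n, v != 0 -> 0 < (v^T *m A *m v) 0 0.

Definition schur (n : nat) (A B : 'M[R]_n) : 'M[R]_n :=
  \matrix_(i, j) (A i j * B i j).

Definition inner (n : nat) (Y Z : 'M[R]_n) : R := \tr (Y *m Z).

Definition sqrtmx (n : nat) (A : 'M[R]_n) : 'M[R]_n :=
  epsilon (inhabits 0) (fun B : 'M[R]_n => psdmx B /\ B *m B = A).

Definition geomean (n : nat) (C D : 'M[R]_n) : 'M[R]_n :=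
  let Ch := sqrtmx C in
  let Cih := invmx Ch in
  Ch *m sqrtmx (Cih *m D *m Cih) *m Ch.

Definition Aop (d r : nat) (C1 C2 : 'I_d -> 'M[R]_r) (X : 'M[R]_r) : 'M[R]_d :=
  \matrix_(i1, i2) inner X (schur (C1 i1) (C2 i2)).

Definition Aadj (d r : nat) (C1 C2 : 'I_d -> 'M[R]_r) (y : 'M[R]_d) : 'M[R]_r :=
  \sum_(i1 < d) \sum_(i2 < d) y i1 i2 *: schur (C1 i1) (C2 i2).

(* squared Euclidean norm of a vector in R^{d^2} *)
Definition sqnorm2 (d : nat) (y : 'M[R]_d) : R :=
  \sum_(i1 < d) \sum_(i2 < d) y i1 i2 ^+ 2.

End Defs.

From Pilot Require Import Defs.
From HB Require Import structures.
From mathcomp Require Import all_boot all_order all_algebra.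
From mathcomp Require Import reals complex.
From Stdlib Require Import ClassicalEpsilon.
From mathcomp.algebra_tactics Require Import ring lra.
Set Implicit Arguments. Unset Strict Implicit. Unset Printing Implicit Defensive.
Import Order.TTheory GRing.Theory Num.Theory.
Local Open Scope ring_scope.

(* Write A X = (<X, C1_i o C2_j>)_ij, Phi = A^T A, K = Phi(C_old), G = A^T t and
   W = K^-1 # C_old.  The Riccati property of the geometric mean gives
   W K W = C_old, and C_new = W G W.  Positivity of A^T t and of C_new comes from
   the Schur product theorem and congruence.  For the descent, put
   (X, Y)_W = tr(W^-1 X W^-1 Y) and T_W(X) = W Phi(X) W: T_W is self-adjoint and
   monotone for this inner product and fixes C_old.  Since 0 <= C_new <= s C_old,
   the iterates T_W^j C_new stay bounded, and Cauchy-Schwarz plus a "power trick"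
   give ||A C_new||^2 <= (C_new, C_new)_W = tr(C_new G).  Together with
   (C_old - C_new, C_old - C_new)_W >= 0 this yields the descent inequality. *)

Lemma quadratic_discriminant (R : realFieldType) (a b c : R) : 0 <= c ->
  (forall s, 0 <= a + s * b *+ 2 + s ^+ 2 * c) -> b ^+ 2 <= a * c.
Proof.
move=> c_ge0 quad_ge0; have [c0|c_neq0] := eqVneq c 0.
  have [->|b_neq0] := eqVneq b 0; first by rewrite c0 expr0n mulr0.
  have := quad_ge0 (- (a + 1) / (b *+ 2)); rewrite c0 mulr0 addr0.
  have -> : - (a + 1) / (b *+ 2) * b *+ 2 = - (a + 1) by field.
  lra.
have c_gt0 : 0 < c by rewrite lt_def c_neq0 c_ge0.
have := quad_ge0 (- b / c).
have -> : a + - b / c * b *+ 2 + (- b / c) ^+ 2 * c = (a * c - b ^+ 2) / c by field.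
by rewrite pmulr_lge0 ?invr_gt0 // subr_ge0.
Qed.

Lemma bernoulli_ineq (R : realDomainType) (h : R) (m : nat) :
  0 <= h -> 1 + m%:R * h <= (1 + h) ^+ m.
Proof.
move=> h_ge0; elim: m => [|m IH]; first by rewrite mul0r addr0 expr0.
rewrite exprSr; apply: le_trans (_ : (1 + m%:R * h) * (1 + h) <= _); last first.
  by rewrite ler_wpM2r // addr_ge0.
have : 0 <= m%:R * h * h by rewrite !mulr_ge0.
rewrite -natr1; nra.
Qed.

Lemma pow2_bounded_le1 (R : archiRealFieldType) (x B : R) :
  (forall k, x ^+ (2 ^ k) <= B) -> x <= 1.
Proof.
move=> pow_le_B; rewrite leNgt; apply/negP => x_gt1.
have h_gt0 : 0 < x - 1 by rewrite subr_gt0.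
pose k := Num.bound `|B / (x - 1)|.
have B_lt : B < k%:R * (x - 1).
  rewrite -ltr_pdivrMr // (le_lt_trans (ler_norm _)) //.
  exact/archi_boundP/normr_ge0.
have k_le : k%:R * (x - 1) <= (2 ^ k)%:R * (x - 1).
  by rewrite ler_pM2r // ler_nat ltnW // ltn_expl.
have := bernoulli_ineq (2 ^ k) (ltW h_gt0); rewrite (addrC 1 (x - 1)) subrK => bern.
have := pow_le_B k; rewrite leNgt => /negP; apply.
by apply: lt_le_trans B_lt (le_trans k_le (le_trans _ bern)); rewrite lerDr.
Qed.

(* The power trick: if m_j^2 <= N m_(2j) (a Cauchy-Schwarz inequality for the
   moments m_j = <x, T^j x>) and the moments m_(j+1) are bounded, then m_1 <= N. *)
Lemma power_trick (R : archiRealFieldType) (m : nat -> R) (N B : R) : 0 <= N ->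
  (forall j, m j ^+ 2 <= N * m (j + j)%N) -> (forall j, m j.+1 <= B) ->
  m 1%N <= N.
Proof.
move=> N_ge0 cs m_le_B.
have [m1_le0|m1_gt0] := leP (m 1%N) 0; first exact: le_trans m1_le0 N_ge0.
have N_gt0 : 0 < N.
  rewrite lt_def N_ge0 andbT; apply: contraTneq (cs 1%N) => ->.
  by rewrite mul0r -ltNge exprn_gt0.
pose rho := m 1%N / N.
have rho_ge0 : 0 <= rho by rewrite divr_ge0 // ltW.
have rho_pow k : rho ^+ (2 ^ k) <= m (2 ^ k)%N / N.
  elim: k => [|k IH]; first by rewrite expn0 expr1.
  rewrite expnS mul2n -addnn exprD -expr2.
  apply: (@le_trans _ _ ((m (2 ^ k)%N / N) ^+ 2)).
    rewrite ler_pXn2r ?nnegrE ?exprn_ge0 //; exact: le_trans (exprn_ge0 _ _) IH.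
  rewrite expr_div_n ler_pdivrMr ?exprn_gt0 //.
  have -> : m (2 ^ k + 2 ^ k)%N / N * N ^+ 2 = N * m (2 ^ k + 2 ^ k)%N.
    by field; rewrite gt_eqF.
  exact: cs.
have : rho <= 1.
  apply: (@pow2_bounded_le1 _ _ (B / N)) => k.
  apply: le_trans (rho_pow k) _; rewrite ler_pM2r ?invr_gt0 //.
  by rewrite -(prednK (expn_gt0 2 k)).
by rewrite ler_pdivrMr // mul1r.
Qed.

Lemma poly_interpolation (F : fieldType) (s : seq F) (g : F -> F) :
  exists p : {poly F}, forall x, x \in s -> p.[x] = g x.
Proof.
elim: s => [|a s [p p_interp]]; first by exists 0.
have [a_in|a_notin] := boolP (a \in s).
  by exists p => x; rewrite inE => /orP[/eqP->|]; exact: p_interp.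
pose q := \prod_(b <- s) ('X - b%:P).
have qa_neq0 : q.[a] != 0.
  rewrite /q horner_prod prodf_seq_neq0; apply/allP => b b_in /=.
  by rewrite hornerXsubC subr_eq0; apply: contra a_notin => /eqP->.
exists (p + ((g a - p.[a]) / q.[a]) *: q) => x; rewrite inE => /orP[/eqP->|x_in].
  by rewrite hornerD hornerZ mulfVK // addrC subrK.
have qx0 : q.[x] = 0.
  by rewrite /q horner_prod (big_rem x x_in) /= hornerXsubC subrr mul0r.
by rewrite hornerD hornerZ qx0 mulr0 addr0 p_interp.
Qed.

Section PositiveMatrices.
Variable R : realType.

(* It is obtained from the unitary diagonalisation of the complexified matrix. *)
Lemma sym_eigen_annihilate n (A : 'M[R]_n.+1) : A^T = A ->
  exists lam : 'I_n.+1 -> R, (forall i, eigenvalue A (lam i)) /\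
    forall q : {poly R}, (forall i, q.[lam i] = 0) -> horner_mx A q = 0.
Proof.
move=> A_sym; pose f := real_complex R; pose Ac : 'M[R[i]]_n.+1 := map_mx f A.
have Ac_herm : Ac \is hermsymmx.
  apply: realsym_hermsym.
    by apply/is_hermitianmxP; rewrite expr0 scale1r map_mx_id // /Ac map_trmx A_sym.
  by apply/mxOverP => i j; rewrite mxE; apply/complex_realP; exists (A i j).
have AcE := orthomx_spectralP (hermitian_normalmx Ac_herm).
set U := spectralmx Ac in AcE; set D := spectral_diag Ac in AcE.
have D_real := hermitian_spectral_diag_real Ac_herm.
pose lam i : R := complex.Re (D 0 i).
have Dlam i : D 0 i = ((lam i)%:C)%C by rewrite /lam RRe_real //; exact: (mxOverP D_real).
have U_unit : U \in unitmx := spectral_unit Ac.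
exists lam; split.
  move=> i; rewrite eigenvalue_root_char -(fmorph_root f) map_char_poly.
  rewrite -eigenvalue_root_char; apply/eigenvalueP; exists (row i U).
    rewrite -/Ac {1}AcE -row_mul !mulmxA mulmxV // mul1mx.
    by rewrite row_mul row_diag_mx -scalemxAl -rowE Dlam.
  apply/negP => /eqP Ui0.
  have : row i U *m invmx U = 0 by rewrite Ui0 mul0mx.
  rewrite rowE mulmxK // => /matrixP /(_ 0 i); rewrite !mxE !eqxx /=.
  by move/eqP; rewrite oner_eq0.
move=> q q_lam; apply: (@map_mx_inj _ _ f).
rewrite map_horner_mx -/Ac AcE horner_mx_uconjC // horner_mx_diag.
have -> : map_mx (horner (map_poly f q)) D = 0.
  by apply/rowP => j; rewrite !mxE Dlam horner_map /= q_lam.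
have -> : diag_mx (0 : 'rV[R[i]]_n.+1) = 0.
  by apply/matrixP => a b; rewrite !mxE mul0rn.
by rewrite mulmx0 mul0mx map_mx0.
Qed.

Lemma cV_sqnorm n (w : 'cV[R]_n) : (w^T *m w) 0 0 = \sum_i w i 0 ^+ 2.
Proof. by rewrite mxE; apply: eq_bigr => i _; rewrite mxE expr2. Qed.

Lemma cV_sqnorm_gt0 n (w : 'cV[R]_n) : w != 0 -> 0 < (w^T *m w) 0 0.
Proof.
move=> w_neq0; rewrite lt_def cV_sqnorm sumr_ge0 ?andbT => [|i _]; last exact: sqr_ge0.
rewrite psumr_eq0 => [|i _]; last exact: sqr_ge0.
apply: contra w_neq0 => /allP w0; apply/eqP/matrixP => i j; rewrite (ord1 j) mxE.
by have /(_ (mem_index_enum i)) /= := w0 i; rewrite sqrf_eq0 => /eqP.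
Qed.

Lemma unit_mulmx_neq0 n (L : 'M[R]_n) (v : 'cV[R]_n) :
  L \in unitmx -> v != 0 -> L *m v != 0.
Proof.
move=> L_unit; apply: contra => /eqP Lv0; apply/eqP.
by have := congr1 (mulmx (invmx L)) Lv0; rewrite mulKmx // mulmx0.
Qed.

Lemma trmx_neq0 m n (A : 'M[R]_(m, n)) : A != 0 -> A^T != 0.
Proof. by apply: contra => /eqP/(congr1 trmx); rewrite trmxK trmx0 => ->. Qed.

Lemma pd_psd n (A : 'M[R]_n) : pdmx A -> psdmx A.
Proof.
move=> [A_sym A_pos]; split => // v; have [->|v_neq0] := eqVneq v 0.
  by rewrite mulmx0 mxE.
exact/ltW/A_pos.
Qed.

Lemma pd_dim0 n (A : 'M[R]_n) : n = 0%N -> pdmx A.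
Proof.
move=> n0; subst n; split => [|v /negP[]]; first by apply/matrixP => [[]].
by rewrite [v]flatmx0.
Qed.

Lemma eigenvalue_pd_gt0 n (A : 'M[R]_n) a : pdmx A -> eigenvalue A a -> 0 < a.
Proof.
move=> [_ A_pos] /eigenvalueP [v Av v_neq0].
have := A_pos _ (trmx_neq0 v_neq0); rewrite trmxK Av -scalemxAl mxE.
have := cV_sqnorm_gt0 (trmx_neq0 v_neq0); rewrite trmxK => vv_gt0.
by rewrite pmulr_lgt0.
Qed.

Lemma trmx_horner n (A : 'M[R]_n.+1) (p : {poly R}) :
  (horner_mx A p)^T = horner_mx A^T p.
Proof.
elim/poly_ind: p => [|p c IH]; first by rewrite !rmorph0 trmx0.
rewrite !(rmorphD, rmorphM) /= !(horner_mx_X, horner_mx_C) linearD /= tr_scalar_mx.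
rewrite -!mulmxE trmx_mul IH; congr (_ + _).
by apply: comm_mx_horner; rewrite /comm_mx.
Qed.

(* Every positive definite matrix has a positive definite square root; it is
   Q^2 where Q = q(A) for a polynomial q interpolating x |-> x^(1/4) on the
   spectrum of A. *)
Lemma pd_sqrt_exists n (A : 'M[R]_n) : pdmx A -> exists B, pdmx B /\ B *m B = A.
Proof.
case: n A => [|n] A A_pd; first by exists A; split => //; rewrite !flatmx0.
have [lam [lam_eig lam_annih]] := sym_eigen_annihilate A_pd.1.
have lam_gt0 i : 0 < lam i := eigenvalue_pd_gt0 A_pd (lam_eig i).
have [q q_interp] := poly_interpolation [seq lam i | i <- enum 'I_n.+1]
  (fun x => Num.sqrt (Num.sqrt x)).
pose Q := horner_mx A q.
have Q_sym : Q^T = Q by rewrite trmx_horner A_pd.1.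
have Q4 : Q *m Q *m (Q *m Q) = A.
  apply/eqP; rewrite -subr_eq0; apply/eqP.
  have -> : Q *m Q *m (Q *m Q) - A = horner_mx A (q ^+ 4 - 'X).
    by rewrite rmorphB rmorphXn /= horner_mx_X (exprD _ 2 2) expr2 -!mulmxE.
  apply: lam_annih => i; rewrite hornerD hornerN hornerX horner_exp q_interp; last first.
    by apply/mapP; exists i => //; rewrite mem_enum.
  have lam_ge0 := ltW (lam_gt0 i).
  by rewrite (exprM _ 2 2) sqr_sqrtr ?sqrtr_ge0 // sqr_sqrtr // subrr.
exists (Q *m Q); split => //; split; first by rewrite trmx_mul Q_sym.
move=> v v_neq0.
have Qv_neq0 : Q *m v != 0.
  apply: contra v_neq0 => /eqP Qv0; apply/negPn/negP => v_neq0.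
  have Av0 : A *m v = 0 by rewrite -Q4 !mulmxA -!(mulmxA _ _ v) Qv0 !mulmx0.
  by have := A_pd.2 _ v_neq0; rewrite -mulmxA Av0 mulmx0 mxE ltxx.
by have := cV_sqnorm_gt0 Qv_neq0; rewrite trmx_mul Q_sym !mulmxA.
Qed.

Lemma qf_sym n (S : 'M[R]_n) (u w : 'cV[R]_n) : S^T = S ->
  (u^T *m S *m w) 0 0 = (w^T *m S *m u) 0 0.
Proof.
move=> S_sym; transitivity ((u^T *m S *m w)^T 0 0); first by rewrite [RHS]mxE.
by rewrite !trmx_mul trmxK S_sym mulmxA.
Qed.

(* A vector on which a PSD quadratic form vanishes lies in the kernel
   (Cauchy-Schwarz for the semi-inner product v^T S w). *)
Lemma psd_qf0_kernel n (S : 'M[R]_n) (v : 'cV[R]_n) :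
  psdmx S -> (v^T *m S *m v) 0 0 = 0 -> S *m v = 0.
Proof.
move=> [S_sym S_pos] qv0; pose x := S *m v.
have quad s : 0 <= (v^T *m S *m v) 0 0 + s * (x^T *m S *m v) 0 0 *+ 2
    + s ^+ 2 * (x^T *m S *m x) 0 0.
  have vx_tr : (v + s *: x)^T = v^T + s *: x^T by rewrite linearD linearZ.
  have := S_pos (v + s *: x); rewrite vx_tr !(mulmxDl, mulmxDr) -!scalemxAr -!scalemxAl.
  move: (qf_sym v x S_sym).
  move: (v^T *m S *m x) (x^T *m S *m v) (v^T *m S *m v) (x^T *m S *m x).
  move=> Qvx Qxv Qvv Qxx sym; rewrite !mxE sym.
  move=> h; apply: le_trans h _; rewrite le_eqVlt; apply/orP; left; apply/eqP; ring.
have := quadratic_discriminant (S_pos x) quad; rewrite qv0 mul0r.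
have -> : (x^T *m S *m v) 0 0 = (x^T *m x) 0 0 by rewrite -mulmxA.
move=> xx_le0; have : (x^T *m x) 0 0 = 0.
  by apply/eqP; rewrite -sqrf_eq0 eq_le xx_le0 sqr_ge0.
by move/eqP; apply: contraTeq => /cV_sqnorm_gt0; rewrite lt_def => /andP[].
Qed.

Lemma pd_unit n (A : 'M[R]_n) : pdmx A -> A \in unitmx.
Proof.
move=> [A_sym A_pos]; rewrite unitmxE unitfE; apply/negP => /det0P [v v_neq0 vA].
have := A_pos _ (trmx_neq0 v_neq0).
by rewrite trmxK -mulmxA -A_sym -trmx_mul vA trmx0 mulmx0 mxE ltxx.
Qed.

Lemma psd_unit_pd n (S : 'M[R]_n) : psdmx S -> S \in unitmx -> pdmx S.
Proof.
move=> S_psd S_unit; split => [|v v_neq0]; first exact: S_psd.1.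
rewrite lt_def S_psd.2 andbT; apply/negP => /eqP qv0.
have := psd_qf0_kernel S_psd qv0 => /(congr1 (mulmx (invmx S))).
by rewrite mulKmx // mulmx0 => /eqP; rewrite (negPf v_neq0).
Qed.

Lemma psd_congr n (P M : 'M[R]_n) : psdmx P -> M^T = M -> psdmx (M *m P *m M).
Proof.
move=> [P_sym P_pos] M_sym; split; first by rewrite !trmx_mul P_sym M_sym mulmxA.
by move=> v; have := P_pos (M *m v); rewrite trmx_mul M_sym !mulmxA.
Qed.

Lemma pd_congr n (P M : 'M[R]_n) : pdmx P -> M^T = M -> M \in unitmx ->
  pdmx (M *m P *m M).
Proof.
move=> [P_sym P_pos] M_sym M_unit; split; first by rewrite !trmx_mul P_sym M_sym mulmxA.
move=> v /(unit_mulmx_neq0 M_unit) /P_pos.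
by rewrite trmx_mul M_sym !mulmxA.
Qed.

(* The inverse of a PD matrix is PD (it is the congruence A^-1 A A^-1). *)
Lemma pd_inv n (A : 'M[R]_n) : pdmx A -> pdmx (invmx A).
Proof.
move=> A_pd; have A_unit := pd_unit A_pd.
have Ai_sym : (invmx A)^T = invmx A by rewrite trmx_inv A_pd.1.
have := pd_congr A_pd Ai_sym; rewrite unitmx_inv => /(_ A_unit).
by rewrite mulVmx // mul1mx.
Qed.

Lemma psd0 n : psdmx (0 : 'M[R]_n).
Proof. by split => [|v]; [rewrite trmx0 | rewrite mulmx0 mul0mx mxE]. Qed.

Lemma psdD n (A B : 'M[R]_n) : psdmx A -> psdmx B -> psdmx (A + B).
Proof.
move=> [A_sym A_pos] [B_sym B_pos]; split; first by rewrite linearD /= A_sym B_sym.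
by move=> v; rewrite mulmxDr mulmxDl mxE addr_ge0.
Qed.

Lemma psdZ n (A : 'M[R]_n) a : 0 <= a -> psdmx A -> psdmx (a *: A).
Proof.
move=> a_ge0 [A_sym A_pos]; split; first by rewrite linearZ /= A_sym.
by move=> v; rewrite -scalemxAr -scalemxAl mxE mulr_ge0.
Qed.

Lemma pdD n (A B : 'M[R]_n) : pdmx A -> psdmx B -> pdmx (A + B).
Proof.
move=> [A_sym A_pos] [B_sym B_pos]; split; first by rewrite linearD /= A_sym B_sym.
by move=> v v_neq0; rewrite mulmxDr mulmxDl mxE ltr_pwDl ?A_pos.
Qed.

Lemma pdZ n (A : 'M[R]_n) a : 0 < a -> pdmx A -> pdmx (a *: A).
Proof.
move=> a_gt0 [A_sym A_pos]; split; first by rewrite linearZ /= A_sym.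
by move=> v v_neq0; rewrite -scalemxAr -scalemxAl mxE mulr_gt0 ?A_pos.
Qed.

Lemma psd_sum n (I : finType) (P : pred I) (F : I -> 'M[R]_n) :
  (forall i, P i -> psdmx (F i)) -> psdmx (\sum_(i | P i) F i).
Proof. by move=> F_psd; apply: big_ind => //; [exact: psd0 | exact: psdD]. Qed.

Lemma sqrtmx_pd n (A : 'M[R]_n) : pdmx A ->
  pdmx (sqrtmx A) /\ sqrtmx A *m sqrtmx A = A.
Proof.
move=> A_pd; have [B_psd BB] : psdmx (sqrtmx A) /\ sqrtmx A *m sqrtmx A = A.
  apply: (epsilon_spec (inhabits 0) (fun B => psdmx B /\ B *m B = A)).
  by have [B [B_pd BB]] := pd_sqrt_exists A_pd; exists B; split => //; exact: pd_psd.
split => //; apply: psd_unit_pd => //.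
by have := pd_unit A_pd; rewrite -{1}BB unitmx_mul => /andP[].
Qed.

Lemma geomean_riccati n (A B : 'M[R]_n) : pdmx A -> pdmx B ->
  pdmx (geomean A B) /\ geomean A B *m invmx A *m geomean A B = B.
Proof.
move=> A_pd B_pd; rewrite /geomean.
have [H_pd HH] := sqrtmx_pd A_pd; set H := sqrtmx A in H_pd HH *.
have H_unit := pd_unit H_pd.
have Hi_sym : (invmx H)^T = invmx H by rewrite trmx_inv H_pd.1.
have M_pd : pdmx (invmx H *m B *m invmx H) by apply: pd_congr; rewrite ?unitmx_inv.
have [S_pd SS] := sqrtmx_pd M_pd; set S := sqrtmx _ in S_pd SS *.
split; first exact: pd_congr S_pd H_pd.1 H_unit.
have HAiH : H *m invmx A *m H = 1%:M.
  apply: (can_inj (mulmxK H_unit)) => /=.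
  by rewrite mul1mx -!mulmxA HH mulVmx ?mulmx1 ?pd_unit.
transitivity (H *m S *m (H *m invmx A *m H) *m S *m H); first by rewrite !mulmxA.
by rewrite HAiH mulmx1 -(mulmxA _ S S) SS !mulmxA mulmxV // mul1mx mulmxKV.
Qed.

Lemma qf_delta n (M : 'M[R]_n) (i : 'I_n) :
  ((delta_mx i 0 : 'cV[R]_n)^T *m M *m (delta_mx i 0 : 'cV[R]_n)) 0 0 = M i i.
Proof. by rewrite trmx_delta -rowE -colE !mxE. Qed.

Lemma delta_neq0 n (i : 'I_n) : (delta_mx i 0 : 'cV[R]_n) != 0.
Proof.
by apply/negP => /eqP/matrixP/(_ i 0); rewrite !mxE !eqxx /= => /eqP; rewrite oner_eq0.
Qed.

(* tr(P B) = tr(L P L) with B = L L; the diagonal entries of L P L are values of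
   the quadratic form of P, hence nonnegative (positive when P is definite). *)
Lemma tr_psd_pd_ge0 n (P B : 'M[R]_n) : psdmx P -> pdmx B -> 0 <= \tr (P *m B).
Proof.
move=> [P_sym P_pos] B_pd; have [L [L_pd LL]] := pd_sqrt_exists B_pd.
rewrite -LL mulmxA mxtrace_mulC mulmxA /mxtrace sumr_ge0 // => i _.
have := P_pos (L *m delta_mx i 0).
by rewrite trmx_mul L_pd.1 -(qf_delta (L *m P *m L)) !mulmxA.
Qed.

Lemma tr_pd_pd_gt0 n (P B : 'M[R]_n) : (0 < n)%N -> pdmx P -> pdmx B ->
  0 < \tr (P *m B).
Proof.
case: n P B => // n P B _ [P_sym P_pos] B_pd; have [L [L_pd LL]] := pd_sqrt_exists B_pd.
have L_unit := pd_unit L_pd.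
have diag_gt0 i : 0 < (L *m P *m L) i i.
  have := P_pos _ (unit_mulmx_neq0 L_unit (delta_neq0 i)).
  by rewrite trmx_mul L_pd.1 -(qf_delta (L *m P *m L)) !mulmxA.
rewrite -LL mulmxA mxtrace_mulC mulmxA /mxtrace (bigD1 ord0) //=.
by rewrite ltr_pwDl // sumr_ge0 // => i _; exact: ltW.
Qed.

Lemma qfE n (A : 'M[R]_n) (v : 'cV[R]_n) :
  (v^T *m A *m v) 0 0 = \sum_i \sum_j v i 0 * A i j * v j 0.
Proof.
rewrite mxE exchange_big /=; apply: eq_bigr => j _; rewrite mxE mulr_suml.
by apply: eq_bigr => i _; rewrite !mxE.
Qed.

(* With A = L L, v^T (A o B) v is the sum over l
   of the B-quadratic forms of the vectors (v_i L_li)_i, one of which is nonzero. *)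
Lemma schur_pd n (A B : 'M[R]_n) : pdmx A -> pdmx B -> pdmx (schur A B).
Proof.
move=> A_pd B_pd; have [L [L_pd LL]] := pd_sqrt_exists A_pd.
have L_sym i j : L i j = L j i by rewrite -[in LHS]L_pd.1 mxE.
split; first by apply/matrixP => i j; rewrite !mxE -[in RHS]A_pd.1 -[in RHS]B_pd.1 !mxE.
move=> v v_neq0; pose w (l : 'I_n) : 'cV[R]_n := \col_i (v i 0 * L l i).
have -> : (v^T *m schur A B *m v) 0 0 = \sum_l ((w l)^T *m B *m w l) 0 0.
  under [RHS]eq_bigr do rewrite qfE.
  rewrite qfE; symmetry; rewrite exchange_big /=; apply: eq_bigr => i _.
  rewrite exchange_big /=; apply: eq_bigr => j _.
  rewrite !mxE -LL mxE mulr_suml mulr_sumr mulr_suml; apply: eq_bigr => l _.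
  by rewrite !mxE (L_sym i l); ring.
have [i0 vi0_neq0] : exists i, v i 0 != 0.
  apply/existsP; apply: contraR v_neq0 => /existsPn v0.
  by apply/eqP/matrixP => i j; rewrite (ord1 j) mxE; apply/eqP/negPn.
have [l0 Ll0_neq0] : exists l, L l i0 != 0.
  apply/existsP; apply: contraTT (A_pd.2 _ (delta_neq0 i0)) => /existsPn L0.
  rewrite qf_delta -LL mxE big1 ?ltxx // => l _.
  by have := L0 l; rewrite negbK L_sym => /eqP ->; rewrite mul0r.
have w_neq0 : w l0 != 0.
  apply/negP => /eqP/matrixP/(_ i0 0); rewrite !mxE => /eqP.
  by rewrite mulf_eq0 (negPf vi0_neq0) (negPf Ll0_neq0).
rewrite (bigD1 l0) //= ltr_pwDl ?B_pd.2 // sumr_ge0 // => l _.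
exact: (pd_psd B_pd).2.
Qed.

End PositiveMatrices.

Lemma term_le_sum (R : numDomainType) (I : finType) (F : I -> R) j :
  (forall i, 0 <= F i) -> F j <= \sum_i F i.
Proof. by move=> F_ge0; rewrite (bigD1 j) //= lerDl sumr_ge0. Qed.

Section SchurOperator.
Variables (R : realType) (d r : nat) (C1 C2 : 'I_d -> 'M[R]_r).
Hypotheses (hC1 : forall i, pdmx (C1 i)) (hC2 : forall i, pdmx (C2 i)).

Local Notation Aop := (Aop C1 C2).
Local Notation Aadj := (Aadj C1 C2).
Local Notation Bs i j := (schur (C1 i) (C2 j)).

Definition Phi (X : 'M[R]_r) : 'M[R]_r := Aadj (Aop X).

Lemma schur_basis_pd i j : pdmx (Bs i j).
Proof. exact: schur_pd. Qed.

Lemma Aadj_sym (y : 'M[R]_d) : (Aadj y)^T = Aadj y.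
Proof.
rewrite /Defs.Aadj raddf_sum; apply: eq_bigr => i _; rewrite raddf_sum.
apply: eq_bigr => j _; rewrite -[in RHS](schur_basis_pd i j).1.
by apply/matrixP => a b; rewrite !mxE.
Qed.

Lemma Aadj_psd (y : 'M[R]_d) : (forall i j, 0 <= y i j) -> psdmx (Aadj y).
Proof.
move=> y_ge0; do 2!apply: psd_sum => ? _.
exact/psdZ/pd_psd/schur_basis_pd.
Qed.

Lemma Aadj_pd (y : 'M[R]_d) (i0 : 'I_d) : (forall i j, 0 < y i j) -> pdmx (Aadj y).
Proof.
move=> y_gt0; have y_ge0 i j := ltW (y_gt0 i j).
rewrite /Defs.Aadj (bigD1 i0) //= (bigD1 i0) //= -addrA.
apply: pdD; first exact/pdZ/schur_basis_pd.
apply: psdD; first by apply: psd_sum => j _; exact/psdZ/pd_psd/schur_basis_pd.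
by do 2!apply: psd_sum => ? _; exact/psdZ/pd_psd/schur_basis_pd.
Qed.

Lemma tr_Aadj (X : 'M[R]_r) (y : 'M[R]_d) :
  \tr (X *m Aadj y) = \sum_i \sum_j y i j * Aop X i j.
Proof.
rewrite /Defs.Aadj mulmx_sumr raddf_sum; apply: eq_bigr => i _.
rewrite mulmx_sumr raddf_sum; apply: eq_bigr => j _.
by rewrite /= -scalemxAr mxtraceZ mxE.
Qed.

Lemma Aop_lincomb s (X Y : 'M[R]_r) : Aop (s *: X - Y) = s *: Aop X - Aop Y.
Proof.
apply/matrixP => i j; rewrite !mxE /inner mulmxBl -scalemxAl.
by rewrite mxtraceD mxtraceZ raddfN.
Qed.

Lemma Aadj_lincomb s (y z : 'M[R]_d) : Aadj (s *: y - z) = s *: Aadj y - Aadj z.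
Proof.
rewrite /Defs.Aadj scaler_sumr -sumrB; apply: eq_bigr => i _.
rewrite scaler_sumr -sumrB; apply: eq_bigr => j _.
by rewrite !mxE scalerBl scalerA.
Qed.

Lemma Aop_ge0 (P : 'M[R]_r) i j : psdmx P -> 0 <= Aop P i j.
Proof. by move=> P_psd; rewrite mxE; apply: tr_psd_pd_ge0 (schur_basis_pd i j). Qed.

Lemma Aop_gt0 (P : 'M[R]_r) i j : (0 < r)%N -> pdmx P -> 0 < Aop P i j.
Proof. by move=> r_gt0 P_pd; rewrite mxE; apply: tr_pd_pd_gt0 (schur_basis_pd i j). Qed.

Lemma Phi_pd (i0 : 'I_d) (X : 'M[R]_r) : pdmx X -> pdmx (Phi X).
Proof.
case: (posnP r) => [r0|r_gt0] X_pd; first exact: pd_dim0.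
by apply: Aadj_pd i0 _ => i j; exact: Aop_gt0.
Qed.

Lemma sqnorm2_residual (t : 'M[R]_d) (X : 'M[R]_r) :
  sqnorm2 (t - Aop X) = sqnorm2 t - (\tr (X *m Aadj t)) *+ 2 + sqnorm2 (Aop X).
Proof.
rewrite tr_Aadj /sqnorm2 -sumrMnl -sumrB -big_split /=; apply: eq_bigr => i _.
rewrite -sumrMnl -sumrB -big_split /=; apply: eq_bigr => j _; rewrite !mxE; ring.
Qed.

Lemma tr_Phi (X Y : 'M[R]_r) :
  \tr (X *m Phi Y) = \sum_i \sum_j Aop Y i j * Aop X i j.
Proof. exact: tr_Aadj. Qed.

Lemma tr_Phi_sym (X Y : 'M[R]_r) : \tr (X *m Phi Y) = \tr (Y *m Phi X).
Proof.
by rewrite !tr_Phi; apply: eq_bigr => i _; apply: eq_bigr => j _; exact: mulrC.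
Qed.

Lemma tr_Phi_diag (X : 'M[R]_r) : \tr (X *m Phi X) = sqnorm2 (Aop X).
Proof.
by rewrite tr_Phi; apply: eq_bigr => i _; apply: eq_bigr => j _; rewrite expr2.
Qed.

(* If W Phi(C) W = C with C positive definite, then W A^T(t) W <= s C for some s
   (take s = sum t_ij / A(C)_ij, using entrywise positivity of A(C)). *)
Lemma update_dominated (t : 'M[R]_d) (C W : 'M[R]_r) :
  (forall i j, 0 <= t i j) -> pdmx C -> W^T = W -> W *m Phi C *m W = C ->
  exists s, psdmx (s *: C - W *m Aadj t *m W).
Proof.
move=> t_ge0 C_pd W_sym WCW; case: (posnP r) => [r0|r_gt0].
  by exists 0; exact/pd_psd/pd_dim0.
set c := Aop C; have c_gt0 i j : 0 < c i j := Aop_gt0 i j r_gt0 C_pd.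
have quot_ge0 i j : 0 <= t i j / c i j by rewrite divr_ge0 // ltW.
exists (\sum_i \sum_j t i j / c i j); set s := (X in X *: C).
rewrite -{1}WCW scalemxAl scalemxAr -mulmxBl -mulmxBr /Phi -/c -Aadj_lincomb.
apply: psd_congr W_sym; apply: Aadj_psd => i j.
have -> : (s *: c - t) i j = s * c i j - t i j by rewrite !mxE.
rewrite subr_ge0 -ler_pdivrMr //.
apply: (le_trans (term_le_sum j (quot_ge0 i))).
by apply: (term_le_sum i) => l; exact: sumr_ge0.
Qed.

(* The form (X, Y)_W = tr(W^-1 X W^-1 Y) is an inner
   product on symmetric matrices, for which T_W(X) = W Phi(X) W is self-adjoint
   and monotone; this is where the majorization inequality lives. *)
Section Majorization.
Variable W : 'M[R]_r.
Hypothesis W_pd : pdmx W.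

Definition wdot (X Y : 'M[R]_r) : R := \tr (invmx W *m X *m invmx W *m Y).

Definition Tw (X : 'M[R]_r) : 'M[R]_r := W *m Phi X *m W.

Lemma wdot_congr X Y : wdot X (W *m Y *m W) = \tr (X *m Y).
Proof.
have W_unit := pd_unit W_pd.
rewrite /wdot !mulmxA -(mulmxA _ (invmx W) W) mulVmx // mulmx1.
by rewrite mxtrace_mulC !mulmxA mulmxV // mul1mx.
Qed.

Lemma wdot_sym X Y : wdot X Y = wdot Y X.
Proof. by rewrite /wdot mxtrace_mulC !mulmxA mxtrace_mulC !mulmxA. Qed.

Lemma wdotDl X1 X2 Y : wdot (X1 + X2) Y = wdot X1 Y + wdot X2 Y.
Proof. by rewrite /wdot mulmxDr !mulmxDl mxtraceD. Qed.

Lemma wdotZl a X Y : wdot (a *: X) Y = a * wdot X Y.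
Proof. by rewrite /wdot -scalemxAr -!scalemxAl mxtraceZ. Qed.

(* Positivity: with W^-1 = L L, (X, X)_W = tr((L X L)^2) is a sum of squares. *)
Lemma wdot_ge0 X : X^T = X -> 0 <= wdot X X.
Proof.
move=> X_sym; have [L [L_pd LL]] := pd_sqrt_exists (pd_inv W_pd).
have -> : wdot X X = \tr ((L *m X *m L) *m (L *m X *m L)).
  by rewrite /wdot -LL !mulmxA [RHS]mxtrace_mulC !mulmxA.
have LXL_sym i j : (L *m X *m L) i j = (L *m X *m L) j i.
  have : (L *m X *m L)^T = L *m X *m L by rewrite !trmx_mul X_sym L_pd.1 mulmxA.
  by move=> /matrixP /(_ j i); rewrite mxE.
rewrite /mxtrace sumr_ge0 // => i _; rewrite mxE sumr_ge0 // => k _.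
by rewrite (LXL_sym k i) -expr2 sqr_ge0.
Qed.

Lemma wdot_expand X Y s :
  wdot (X + s *: Y) (X + s *: Y) = wdot X X + s * wdot X Y *+ 2 + s ^+ 2 * wdot Y Y.
Proof.
have wdotDr A B1 B2 : wdot A (B1 + B2) = wdot A B1 + wdot A B2.
  by rewrite wdot_sym wdotDl !(wdot_sym _ A).
have wdotZr a A B : wdot A (a *: B) = a * wdot A B by rewrite wdot_sym wdotZl wdot_sym.
by rewrite !wdotDl !wdotDr !wdotZl !wdotZr (wdot_sym Y X); ring.
Qed.

Lemma wdot_cs X Y : X^T = X -> Y^T = Y -> wdot X Y ^+ 2 <= wdot X X * wdot Y Y.
Proof.
move=> X_sym Y_sym; apply: quadratic_discriminant; first exact: wdot_ge0.
move=> s; rewrite -wdot_expand; apply: wdot_ge0.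
by rewrite linearD linearZ /= X_sym Y_sym.
Qed.

Lemma wdot_Tw X Y : wdot X (Tw Y) = \tr (X *m Phi Y).
Proof. exact: wdot_congr. Qed.

Lemma wdot_iter_Tw j X Y : wdot (iter j Tw X) Y = wdot X (iter j Tw Y).
Proof.
elim: j X Y => [//|j IH] X Y.
by rewrite iterS wdot_sym wdot_Tw tr_Phi_sym -wdot_Tw IH -iterSr.
Qed.

Lemma iter_Tw_sym j X : X^T = X -> (iter j Tw X)^T = iter j Tw X.
Proof.
by case: j => [//|j] _; rewrite iterS /Tw /Phi !trmx_mul W_pd.1 Aadj_sym mulmxA.
Qed.

Lemma iter_Tw_dominated C X s :
  W *m Phi C *m W = C -> psdmx X -> psdmx (s *: C - X) ->
  forall j, psdmx (iter j Tw X) /\ psdmx (s *: C - iter j Tw X).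
Proof.
move=> WCW X_psd sCX; elim=> [//|j [Y_psd sCY]]; rewrite iterS.
have Tw_psd P : psdmx P -> psdmx (Tw P).
  by move=> P_psd; apply: psd_congr W_pd.1; apply: Aadj_psd => i k; exact: Aop_ge0.
split; first exact: Tw_psd.
rewrite /Tw -{1}WCW scalemxAl scalemxAr -mulmxBl -mulmxBr /Phi.
by rewrite -Aadj_lincomb -Aop_lincomb; apply: Tw_psd.
Qed.

(* The moments m_j = (X, T_W^j X)_W satisfy m_j^2 <= m_0 m_2j by Cauchy-Schwarz
   and are bounded by domination, so the power trick gives m_1 <= m_0. *)
Lemma majorization C X s : W *m Phi C *m W = C -> psdmx X -> psdmx (s *: C - X) ->
  sqnorm2 (Aop X) <= wdot X X.
Proof.
move=> WCW X_psd sCX; pose m j := wdot X (iter j Tw X).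
have -> : sqnorm2 (Aop X) = m 1%N by rewrite /m /= wdot_Tw tr_Phi_diag.
apply: (@power_trick _ m _ (\sum_i \sum_j s * Aop C i j * Aop X i j)).
- exact: wdot_ge0 X_psd.1.
- move=> j; have := wdot_cs X_psd.1 (iter_Tw_sym j X_psd.1).
  by rewrite wdot_iter_Tw -iterD.
- move=> j; rewrite /m iterS wdot_Tw tr_Phi.
  have [_ sCY] := iter_Tw_dominated WCW X_psd sCX j.
  apply: ler_sum => i _; apply: ler_sum => k _.
  rewrite ler_wpM2r ?Aop_ge0 //.
  by have := Aop_ge0 i k sCY; rewrite Aop_lincomb !mxE subr_ge0.
Qed.

(* By majorization
   ||A X||^2 <= (X, X)_W = tr(X A^T t), while (C - X, C - X)_W >= 0 reads
   ||A C||^2 - 2 tr(C A^T t) + tr(X A^T t) >= 0. *)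
Lemma descent (t : 'M[R]_d) (C : 'M[R]_r) :
  (forall i j, 0 <= t i j) -> pdmx C -> W *m Phi C *m W = C ->
  sqnorm2 (t - Aop (W *m Aadj t *m W)) <= sqnorm2 (t - Aop C).
Proof.
move=> t_ge0 C_pd WCW; set G := Aadj t; set X := W *m G *m W.
have X_psd : psdmx X := psd_congr (Aadj_psd t_ge0) W_pd.1.
have [s sCX] := update_dominated t_ge0 C_pd W_pd.1 WCW.
have major := majorization WCW X_psd sCX.
have XX : wdot X X = \tr (X *m G) := wdot_congr X G.
have CC : wdot C C = sqnorm2 (Aop C) by rewrite -{2}WCW wdot_congr tr_Phi_diag.
have CX : wdot C X = \tr (C *m G) := wdot_congr C G.
have CX_sym : (C + (-1) *: X)^T = C + (-1) *: X.
  by rewrite linearD linearZ /= C_pd.1 X_psd.1.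
have := wdot_ge0 CX_sym; rewrite wdot_expand XX CC CX.
rewrite !sqnorm2_residual; lra.
Qed.

End Majorization.

End SchurOperator.

Theorem mainTheorem6 (R : realType) (d r : nat)
    (T : 'I_d -> 'I_d -> 'I_d -> R)
    (hT : forall i1 i2 i3, 0 <= T i1 i2 i3)
    (C1 C2 : 'I_d -> 'M[R]_r)
    (hC1 : forall i, pdmx (C1 i)) (hC2 : forall i, pdmx (C2 i))
    (i3 : 'I_d) :
  let t : 'M[R]_d := \matrix_(i1, i2) T i1 i2 i3 in
  psdmx (Aadj C1 C2 t) /\
  forall Cold : 'M[R]_r, pdmx Cold ->
    let W := geomean (invmx (Aadj C1 C2 (Aop C1 C2 Cold))) Cold in
    let Cnew := W *m Aadj C1 C2 t *m W in
    psdmx Cnew /\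
    sqnorm2 (t - Aop C1 C2 Cnew) <= sqnorm2 (t - Aop C1 C2 Cold).
Proof.
move=> t; have t_ge0 i1 i2 : 0 <= t i1 i2 by rewrite mxE.
have G_psd := Aadj_psd hC1 hC2 t_ge0.
split=> // Cold Cold_pd W Cnew.
have K_pd := Phi_pd hC1 hC2 i3 Cold_pd.
have [W_pd WKW] := geomean_riccati (pd_inv K_pd) Cold_pd.
rewrite invmxK in WKW.
split; first exact: psd_congr G_psd W_pd.1.
exact: descent.
Qed.
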